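(* Let $K$ be a field finitely generated over ${\mathbb F}_p$, let $h_1,\dots,h_m\in K$ be such that $K=K^{\langle p\rangle}h_1\oplus\cdots\oplus K^{\langle p\rangle}h_m$, and define $\pi_1,\dots,\pi_m:K\to K$ by $f=\sum_{i=1}^m\pi_i(f)^ph_i$ for all $f\in K$. If $V\subseteq K$ is a finite-dimensional ${\mathbb F}_p$-subspace, then there exists a finite-dimensional ${\mathbb F}_p$-subspace $W\subseteq K$ containing $V$ such that $\pi_i(VW)\subseteq W$ for all $i=1,\dots,m$.
   Context: $K^{\langle p\rangle}=\{f^p\mid f\in K\}$ is the subfield of $p$-th powers; the extension $K/K^{\langle p\rangle}$ is finite. For ${\mathbb F}_p$-subspaces $V,W\subseteq K$, $VW$ denotes the ${\mathbb F}_p$-span of all products $vw$ with $v\in V$, $w\in W$. *)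

From HB Require Import structures.
From mathcomp Require Import all_boot all_order all_algebra.
Set Implicit Arguments. Unset Strict Implicit. Unset Printing Implicit Defensive.
Import GRing.Theory.
Local Open Scope ring_scope.

Section FpSpans.
Variables (p : nat) (K : fieldType).

(* x is an F_p-linear combination of the (finitely many) vectors in s;
   the F_p-scalar c acts on K through its natural representative
   (val c)%:R, which is the F_p-action when K has characteristic p. *)
Definition Fpcomb (s : seq K) (x : K) : Prop :=
  exists c : 'I_(size s) -> 'F_p,
    x = \sum_(i < size s) ((c i : nat)%:R * s`_i).

Definition Fpspan (S : K -> Prop) (x : K) : Prop :=
  exists s : seq K, (forall y, y \in s -> S y) /\ Fpcomb s x.

Definition fd_Fp_subspace (V : K -> Prop) : Prop :=
  exists s : seq K, forall x, V x <-> Fpcomb s x.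

Definition prod_space (V W : K -> Prop) : K -> Prop :=
  Fpspan (fun x => exists v w, V v /\ W w /\ x = v * w).

End FpSpans.

Definition subfield_closed (K : fieldType) (S : K -> Prop) : Prop :=
  [/\ S 0, S 1,
      (forall x y, S x -> S y -> S (x - y)),
      (forall x y, S x -> S y -> S (x * y)) &
      (forall x, S x -> S x^-1)].

Definition finitely_generated_field (K : fieldType) : Prop :=
  exists s : seq K, forall S : K -> Prop,
    (forall x, x \in s -> S x) -> subfield_closed S -> forall x, S x.

From mathcomp Require Import all_boot all_order all_algebra.
From mathcomp Require Import zify ring.
Set Implicit Arguments. Unset Strict Implicit. Unset Printing Implicit Defensive.
Import GRing.Theory.
Local Open Scope ring_scope.

(* Let Y consist of a spanning set of V and of field generators of K.  Every
   element of K is a quotient of elements of the ring F_p[Y], so a single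
   s <> 0 in F_p[Y] clears the denominators of the finitely many pi_i(y^a),
   y^a a monomial in Y with all exponents < p.  Since pi_i(u^p v) = u pi_i(v),
   writing monomials as u^p v with v reduced shows that F_p[Y, 1/s] is stable
   under every pi_i.  Filtering F_p[Y, 1/s] by the spans B_N of the monomials
   with all exponents at most N, the same decomposition gives
   pi_i(B_N) <= B_(N/p + C) for a constant C, so W = B_(2C+1) works:
   V <= B_1 and (2C+2)/p + C <= 2C+1. *)

Section NatComb.
Variable M : nmodType.

Definition natcomb (s : seq M) (x : M) : Prop :=
  exists c : 'I_(size s) -> nat, x = \sum_(i < size s) s`_i *+ c i.

Lemma natcomb0 s : natcomb s 0.
Proof. by exists (fun _ => 0%N); rewrite big1. Qed.

Lemma natcombD s x y : natcomb s x -> natcomb s y -> natcomb s (x + y).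
Proof.
move=> [c ->] [d ->]; exists (fun i => c i + d i)%N.
by rewrite -big_split; apply: eq_bigr => i _; rewrite mulrnDr.
Qed.

Lemma natcomb_mem s y : y \in s -> natcomb s y.
Proof.
rewrite -index_mem => ys; exists (fun i => (i == Ordinal ys) : nat).
rewrite (bigD1 (Ordinal ys)) //= big1 => [|i /negbTE -> //].
by rewrite eqxx nth_index ?addr0 // -index_mem.
Qed.

Lemma natcomb_ind (P : M -> Prop) s x :
  P 0 -> (forall a b, P a -> P b -> P (a + b)) ->
  (forall y, y \in s -> P y) -> natcomb s x -> P x.
Proof.
move=> P0 PD Ps [c ->]; apply: (big_ind P) => // i _.
have : P s`_i by apply: Ps; rewrite mem_nth.
by elim: (c i) => [|k IH] Pi; rewrite ?mulr0n // mulrS; apply: PD => //; apply: IH.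
Qed.

Lemma natcombMn s x k : natcomb s x -> natcomb s (x *+ k).
Proof.
move=> sx; elim: k => [|k IH]; first by rewrite mulr0n; apply: natcomb0.
by rewrite mulrS; apply: natcombD.
Qed.

End NatComb.

Lemma Fpcomb_natcomb (p : nat) (K : fieldType) {s : seq K} {x : K} :
  p \in [pchar K] -> Fpcomb p s x <-> natcomb s x.
Proof.
move=> hchar; split=> [[c ->]|[c ->]].
  by exists (fun i => (c i : nat)); apply: eq_bigr => i _; rewrite mulr_natl.
exists (fun i => inZp (c i)); apply: eq_bigr => i _.
rewrite /= Fp_cast ?(pcharf_prime hchar) //.
by rewrite GRing.natr_mod_pchar // mulr_natl.
Qed.

Section FrobeniusCoordinates.
Variables (p : nat) (K : comNzRingType).
Hypothesis hchar : p \in [pchar K].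
Variables (m : nat) (h : 'I_m -> K) (pi : 'I_m -> K -> K).
Hypothesis hindep : forall g : 'I_m -> K,
  \sum_(i < m) g i ^+ p * h i = 0 -> forall i, g i = 0.
Hypothesis hpi : forall f : K, f = \sum_(i < m) pi i f ^+ p * h i.

Let exprpD (a b : K) : (a + b) ^+ p = a ^+ p + b ^+ p.
Proof. by rewrite exprDn_pchar // pnatE ?(pcharf_prime hchar). Qed.

Let exprpB (a b : K) : (a - b) ^+ p = a ^+ p - b ^+ p.
Proof. by apply: (addIr (b ^+ p)); rewrite -exprpD !subrK. Qed.

Lemma pi_unique (g : 'I_m -> K) x :
  x = \sum_(i < m) g i ^+ p * h i -> forall i, pi i x = g i.
Proof.
move=> hx i; apply/eqP; rewrite -subr_eq0; apply/eqP; move: i; apply: hindep.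
by under eq_bigr => i _ do rewrite exprpB mulrBl; rewrite sumrB -hpi -hx subrr.
Qed.

Lemma piD i x y : pi i (x + y) = pi i x + pi i y.
Proof.
apply: (@pi_unique (fun i => pi i x + pi i y)).
by under eq_bigr => j _ do rewrite exprpD mulrDl; rewrite big_split -!hpi.
Qed.

Lemma piZ i a x : pi i (a ^+ p * x) = a * pi i x.
Proof.
apply: (@pi_unique (fun i => a * pi i x)).
by under eq_bigr => j _ do rewrite exprMn -mulrA; rewrite -mulr_sumr -hpi.
Qed.

Lemma pi0 i : pi i 0 = 0.
Proof. by apply: (addrI (pi i 0)); rewrite -piD !addr0. Qed.

End FrobeniusCoordinates.

Section Monomials.
Variables (K : comNzRingType) (Z : seq K).

Definition monomial (a : nat -> nat) : K := \prod_(0 <= j < size Z) Z`_j ^+ a j.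

Definition monomials_le N : seq K :=
  [seq monomial (fun j => if insub j is Some k then val (f k) else 0%N)
  | f : {ffun 'I_(size Z) -> 'I_N.+1} <- enum {ffun 'I_(size Z) -> 'I_N.+1}].

Lemma eq_monomial a b :
  (forall j, (j < size Z)%N -> a j = b j) -> monomial a = monomial b.
Proof. by move=> eq_ab; apply: eq_big_nat => j /andP[_ /eq_ab ->]. Qed.

Lemma mem_monomials_le N a :
  (forall j, (j < size Z)%N -> (a j <= N)%N) -> monomial a \in monomials_le N.
Proof.
move=> a_le; apply/mapP; exists [ffun k : 'I_(size Z) => inord (a k)].
  by rewrite mem_enum.
apply: eq_monomial => j ltjZ; case: insubP => [k _ <-|]; last by rewrite ltjZ.
by rewrite ffunE /= inordK // ltnS a_le.
Qed.

Lemma monomials_leP N y :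
  y \in monomials_le N -> exists2 a, (forall j, a j <= N)%N & y = monomial a.
Proof.
move=> /mapP[f _ ->]; eexists; last by []; move=> j /=.
by case: insub => [k|//]; rewrite -ltnS ltn_ord.
Qed.

Lemma monomialD a b : monomial (fun j => a j + b j)%N = monomial a * monomial b.
Proof. by rewrite -big_split; apply: eq_bigr => j _; rewrite exprD. Qed.

Lemma monomial_divn_modn p a : monomial a =
  monomial (fun j => a j %/ p)%N ^+ p * monomial (fun j => a j %% p)%N.
Proof.
rewrite -prodrXl -big_split; apply: eq_bigr => j _.
by rewrite /= -exprM -exprD -divn_eq.
Qed.

Definition boxspan N : K -> Prop := natcomb (monomials_le N).

Lemma boxspan_ind (P : K -> Prop) N x :
  P 0 -> (forall u v, P u -> P v -> P (u + v)) ->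
  (forall a, (forall j, a j <= N)%N -> P (monomial a)) -> boxspan N x -> P x.
Proof.
move=> P0 PD Pmon; apply: natcomb_ind => // y /monomials_leP[a a_le ->].
exact: Pmon.
Qed.

Lemma boxspan_monomial N a :
  (forall j, (j < size Z)%N -> (a j <= N)%N) -> boxspan N (monomial a).
Proof. by move=> a_le; apply/natcomb_mem/mem_monomials_le. Qed.

Lemma boxspan0 N : boxspan N 0.
Proof. exact: natcomb0. Qed.

Lemma boxspanD N x y : boxspan N x -> boxspan N y -> boxspan N (x + y).
Proof. exact: natcombD. Qed.

Lemma boxspanS M N x : (M <= N)%N -> boxspan M x -> boxspan N x.
Proof.
move=> leMN; apply: boxspan_ind; [exact: boxspan0 | exact: boxspanD |].
by move=> a a_le; apply: boxspan_monomial => j _; apply: leq_trans leMN.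
Qed.

Lemma boxspanM M N x y :
  boxspan M x -> boxspan N y -> boxspan (M + N) (x * y).
Proof.
move=> Mx Ny; elim/boxspan_ind: Mx => [|u v Hu Hv|a a_le].
- by rewrite mul0r; apply: boxspan0.
- by rewrite mulrDl; apply: boxspanD.
elim/boxspan_ind: Ny => [|u v Hu Hv|b b_le].
- by rewrite mulr0; apply: boxspan0.
- by rewrite mulrDr; apply: boxspanD.
by rewrite -monomialD; apply: boxspan_monomial => j _; apply: leq_add.
Qed.

Lemma boxspan1 : boxspan 0 1.
Proof.
have -> : 1 = monomial (fun _ => 0%N) by rewrite /monomial big1.
exact: boxspan_monomial.
Qed.

Lemma boxspan_mem y : y \in Z -> boxspan 1 y.
Proof.
move=> yZ; have ltyZ : (index y Z < size Z)%N by rewrite index_mem.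
have -> : y = monomial (fun j => (j == index y Z) : nat).
  rewrite /monomial big_mkord (bigD1 (Ordinal ltyZ)) //= eqxx nth_index //.
  by rewrite big1 ?mulr1 // => j; rewrite -val_eqE => /negbTE ->.
by apply: boxspan_monomial => j _; case: eqP.
Qed.

(* Coefficients are natural numbers: natpoly Z is the subsemiring generated by
   Z, which in characteristic p is the ring F_p[Z] (see natpolyN). *)
Definition natpoly x : Prop := exists N, boxspan N x.

Lemma natpoly0 : natpoly 0.
Proof. by exists 0%N; apply: boxspan0. Qed.

Lemma natpoly1 : natpoly 1.
Proof. by exists 0%N; apply: boxspan1. Qed.

Lemma natpolyD x y : natpoly x -> natpoly y -> natpoly (x + y).
Proof.
move=> [M Mx] [N Ny]; exists (maxn M N); apply: boxspanD.
  by apply: boxspanS Mx; rewrite leq_maxl.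
by apply: boxspanS Ny; rewrite leq_maxr.
Qed.

Lemma natpolyM x y : natpoly x -> natpoly y -> natpoly (x * y).
Proof. by move=> [M Mx] [N Ny]; exists (M + N)%N; apply: boxspanM. Qed.

Lemma natpolyX x k : natpoly x -> natpoly (x ^+ k).
Proof.
move=> px; elim: k => [|k IH]; first exact: natpoly1.
by rewrite exprS; apply: natpolyM.
Qed.

Lemma natpoly_mem y : y \in Z -> natpoly y.
Proof. by exists 1%N; apply: boxspan_mem. Qed.

Lemma natpoly_bound (l : seq K) :
  (forall x, x \in l -> natpoly x) -> exists N, forall x, x \in l -> boxspan N x.
Proof.
elim: l => [|y l IH] pl; first by exists 0%N.
have [M My] := pl y (mem_head _ _).
have [N Nl] : exists N, forall x, x \in l -> boxspan N x.
  by apply: IH => x lx; apply: pl; rewrite inE lx orbT.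
exists (maxn M N) => x; rewrite inE => /predU1P[->|lx].
  by apply: boxspanS My; rewrite leq_maxl.
by apply: boxspanS (Nl _ lx); rewrite leq_maxr.
Qed.

Section PrimeCharacteristic.
Variable p : nat.
Hypothesis hchar : p \in [pchar K].

Lemma natpolyN x : natpoly x -> natpoly (- x).
Proof.
have p_gt0 := prime_gt0 (pcharf_prime hchar).
move=> [N Nx]; exists N; have -> : - x = x *+ p.-1.
  apply/eqP; rewrite eq_sym -subr_eq0 opprK -mulrSr prednK //.
  by rewrite -mulr_natr (pcharf0 hchar) mulr0.
exact: natcombMn.
Qed.

Lemma natpolyB x y : natpoly x -> natpoly y -> natpoly (x - y).
Proof. by move=> px py; apply: natpolyD => //; apply: natpolyN. Qed.

End PrimeCharacteristic.

End Monomials.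

Lemma natpoly_monomial (K : comNzRingType) (Y Z : seq K) a :
  (forall y, y \in Y -> natpoly Z y) -> natpoly Z (monomial Y a).
Proof.
move=> YZ; rewrite /monomial big_seq.
apply: big_ind => [|u v|j]; [exact: natpoly1 | exact: natpolyM |].
by rewrite mem_index_iota => /andP[_ ltjY]; apply/natpolyX/YZ; rewrite mem_nth.
Qed.

Lemma natpoly_trans (K : comNzRingType) (Y Z : seq K) x :
  (forall y, y \in Y -> natpoly Z y) -> natpoly Y x -> natpoly Z x.
Proof.
move=> YZ [N]; elim/boxspan_ind => [|u v|a _]; [exact: natpoly0 | exact: natpolyD |].
exact: natpoly_monomial.
Qed.

Lemma monomial_rcons (K : comNzRingType) (Y : seq K) t a :
  monomial (rcons Y t) a = monomial Y a * t ^+ a (size Y).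
Proof.
rewrite /monomial size_rcons big_nat_recr //= nth_rcons ltnn eqxx; congr (_ * _).
by apply: eq_big_nat => j /andP[_ ltjY]; rewrite nth_rcons ltjY.
Qed.

Section Fractions.
Variables (p : nat) (K : fieldType) (Y : seq K).
Hypothesis hchar : p \in [pchar K].
Hypothesis Y_generates : forall S : K -> Prop,
  (forall y, y \in Y -> S y) -> subfield_closed S -> forall x, S x.

Lemma natpoly_fraction x :
  exists a b, [/\ natpoly Y a, natpoly Y b, b != 0 & x = a / b].
Proof.
have natpoly_frac y : natpoly Y y ->
    exists a b, [/\ natpoly Y a, natpoly Y b, b != 0 & y = a / b].
  move=> Yy; exists y, 1; rewrite divr1.
  by split=> //; [exact: natpoly1 | exact: oner_neq0].
move: x; apply: Y_generates => [y /natpoly_mem|]; first exact: natpoly_frac.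
split.
- exact/natpoly_frac/natpoly0.
- exact/natpoly_frac/natpoly1.
- move=> _ _ [a [b [Ya Yb b0 ->]]] [c [d [Yc Yd d0 ->]]].
  exists (a * d - c * b), (b * d); split; last by field; apply/andP.
  + by apply: (natpolyB hchar); apply: natpolyM.
  + exact: natpolyM.
  + by rewrite mulf_neq0.
- move=> _ _ [a [b [Ya Yb b0 ->]]] [c [d [Yc Yd d0 ->]]].
  exists (a * c), (b * d); split; last by field; apply/andP.
  + exact: natpolyM.
  + exact: natpolyM.
  + by rewrite mulf_neq0.
- move=> _ [a [b [Ya Yb b0 ->]]].
  have [->|a0] := eqVneq a 0; last by exists b, a; rewrite invf_div.
  by rewrite mul0r invr0; apply/natpoly_frac/natpoly0.
Qed.

Lemma natpoly_common_denominator (l : seq K) :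
  exists s, [/\ natpoly Y s, s != 0 & forall x, x \in l -> natpoly Y (x * s)].
Proof.
elim: l => [|y l [s [Ys s0 Yl]]].
  by exists 1; split=> //; [exact: natpoly1 | exact: oner_neq0].
have [a [b [Ya Yb b0 ->]]] := natpoly_fraction y.
exists (s * b); split; [exact: natpolyM | by rewrite mulf_neq0 |].
move=> x; rewrite inE => /predU1P[->|lx].
  by rewrite mulrCA mulfVK //; apply: natpolyM.
by rewrite mulrA; apply/natpolyM/Yb/Yl.
Qed.

End Fractions.

Lemma natpoly_rcons_inv_mulX (K : fieldType) (Y : seq K) s x :
  natpoly Y s -> s != 0 -> natpoly (rcons Y s^-1) x ->
  exists E, natpoly Y (x * s ^+ E).
Proof.
move=> Ys s0 [N]; elim/boxspan_ind => [|u v [E Yu] [F Yv]|a a_le].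
- by exists 0%N; rewrite mul0r; apply: natpoly0.
- exists (E + F)%N; rewrite mulrDl exprD mulrA [s ^+ E * _]mulrC mulrA.
  by apply: natpolyD; apply: natpolyM => //; apply: natpolyX.
exists (a (size Y)); rewrite monomial_rcons -mulrA -exprMn mulVf // expr1n mulr1.
by exists N; apply: boxspan_monomial.
Qed.

Section Stability.
Variables (p : nat) (K : fieldType).
Hypothesis hchar : p \in [pchar K].
Variables (m : nat) (h : 'I_m -> K) (pi : 'I_m -> K -> K).
Hypothesis hindep : forall g : 'I_m -> K,
  \sum_(i < m) g i ^+ p * h i = 0 -> forall i, g i = 0.
Hypothesis hpi : forall f : K, f = \sum_(i < m) pi i f ^+ p * h i.

Let p_gt0 : (0 < p)%N := prime_gt0 (pcharf_prime hchar).

Let reduced_monomial (Y : seq K) a :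
  monomial Y (fun j => a j %% p)%N \in monomials_le Y p.-1.
Proof. by apply: mem_monomials_le => j _; rewrite -ltnS prednK ?ltn_mod. Qed.

Lemma pi_natpoly_rcons_inv (Y : seq K) s :
  natpoly Y s -> s != 0 ->
  (forall i y, y \in monomials_le Y p.-1 -> natpoly Y (pi i y * s)) ->
  forall i x, natpoly (rcons Y s^-1) x -> natpoly (rcons Y s^-1) (pi i x).
Proof.
move=> Ys s0 Y_pi_s i x; set Z := rcons Y s^-1.
have YZ y : y \in Y -> natpoly Z y.
  by move=> Yy; apply: natpoly_mem; rewrite mem_rcons inE Yy orbT.
have Z_sinv : natpoly Z s^-1 by apply: natpoly_mem; rewrite mem_rcons mem_head.
have pi_natpoly r : natpoly Y r -> natpoly Z (pi i r).
  move=> [N]; elim/boxspan_ind => [|u v|a _].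
  - by rewrite (pi0 hchar hindep hpi); apply: natpoly0.
  - by rewrite (piD hchar hindep hpi); apply: natpolyD.
  rewrite (monomial_divn_modn _ p) (piZ hchar hindep hpi).
  apply: natpolyM; first exact: natpoly_monomial.
  rewrite -[pi i _](mulfK s0); apply: natpolyM => //.
  exact/(natpoly_trans YZ)/Y_pi_s/reduced_monomial.
move=> /(natpoly_rcons_inv_mulX Ys s0) [E YxE].
have -> : x = (s^-1 ^+ E) ^+ p * (x * s ^+ E * s ^+ (E * p.-1)).
  rewrite -mulrA -exprD -mulnS prednK //.
  by rewrite mulrCA -exprM -exprMn mulVf // expr1n mulr1.
rewrite (piZ hchar hindep hpi); apply: natpolyM; first exact: natpolyX.
by apply/pi_natpoly/natpolyM => //; apply: natpolyX.
Qed.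

Lemma pi_boxspan (Z : seq K) :
  (forall i x, natpoly Z x -> natpoly Z (pi i x)) ->
  exists C, forall M i x, boxspan Z M x -> boxspan Z (M %/ p + C) (pi i x).
Proof.
move=> Z_pi.
have [C HC] : exists C, forall y,
    y \in [seq pi i y | i <- enum 'I_m, y <- monomials_le Z p.-1] -> boxspan Z C y.
  apply: natpoly_bound => _ /allpairsP[[i y] [_ Zy ->]]; apply: Z_pi.
  by exists p.-1; apply: natcomb_mem.
exists C => M i x; elim/boxspan_ind => [|u v|a a_le].
- by rewrite (pi0 hchar hindep hpi); apply: boxspan0.
- by rewrite (piD hchar hindep hpi); apply: boxspanD.
rewrite (monomial_divn_modn _ p) (piZ hchar hindep hpi); apply: boxspanM.
  by apply: boxspan_monomial => j _; apply: leq_div2r.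
by apply/HC/allpairs_f; rewrite ?mem_enum ?reduced_monomial.
Qed.

Lemma pi_boxspan_contract (Z : seq K) :
  (forall i x, natpoly Z x -> natpoly Z (pi i x)) ->
  exists2 N, (0 < N)%N & forall i x, boxspan Z N.+1 x -> boxspan Z N (pi i x).
Proof.
move=> /pi_boxspan[C HC]; exists C.*2.+1 => // i x /(HC _ i); apply: boxspanS.
have : (C.*2.+2 %/ p <= C.*2.+2 %/ 2)%N.
  by apply: leq_div2l; rewrite ?prime_gt1 ?(pcharf_prime hchar).
lia.
Qed.

Lemma pi_stable_subspace (Z : seq K) (V : K -> Prop) :
  (forall i x, natpoly Z x -> natpoly Z (pi i x)) ->
  (forall x, V x -> boxspan Z 1 x) ->
  exists W : K -> Prop,
    [/\ fd_Fp_subspace p W,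
        (forall x, V x -> W x) &
        (forall (i : 'I_m) (x : K), prod_space p V W x -> W (pi i x))].
Proof.
move=> /pi_boxspan_contract[N N_gt0 Z_pi_N] V_Z1.
exists (Fpcomb p (monomials_le Z N)); split; first by exists (monomials_le Z N).
  move=> x /V_Z1 Z1x; apply/(Fpcomb_natcomb hchar); exact: boxspanS N_gt0 Z1x.
move=> i x [t [VW_t /(Fpcomb_natcomb hchar) tx]]; apply/(Fpcomb_natcomb hchar).
elim/natcomb_ind: tx => [|u v|y /VW_t [v [w [Vv [/(Fpcomb_natcomb hchar) ZNw ->]]]]].
- by rewrite (pi0 hchar hindep hpi); apply: boxspan0.
- by rewrite (piD hchar hindep hpi); apply: boxspanD.
exact: Z_pi_N (boxspanM (V_Z1 _ Vv) ZNw).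
Qed.

End Stability.

Theorem proposition5p2 (p : nat) (K : fieldType)
  (hp : prime p) (hchar : p \in [pchar K])
  (hfg : finitely_generated_field K)
  (m : nat) (h : 'I_m -> K)
  (hspan : forall f : K, exists g : 'I_m -> K, f = \sum_(i < m) (g i) ^+ p * h i)
  (hindep : forall g : 'I_m -> K,
      \sum_(i < m) (g i) ^+ p * h i = 0 -> forall i, g i = 0)
  (pi : 'I_m -> K -> K)
  (hpi : forall f : K, f = \sum_(i < m) (pi i f) ^+ p * h i)
  (V : K -> Prop) (hV : fd_Fp_subspace p V) :
  exists W : K -> Prop,
    [/\ fd_Fp_subspace p W,
        (forall x, V x -> W x) &
        (forall (i : 'I_m) (x : K), prod_space p V W x -> W (pi i x))].
Proof.
have [sV HsV] := hV; have [sg sg_generates] := hfg.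
pose Y := sV ++ sg.
have Y_generates S : (forall y, y \in Y -> S y) -> subfield_closed S -> forall x, S x.
  by move=> YS; apply: sg_generates => y sgy; apply: YS; rewrite mem_cat sgy orbT.
have [s [Ys s0 Y_pi_s]] := natpoly_common_denominator hchar Y_generates
  [seq pi i y | i <- enum 'I_m, y <- monomials_le Y p.-1].
pose Z := rcons Y s^-1.
have Z_pi : forall i x, natpoly Z x -> natpoly Z (pi i x).
  apply: (pi_natpoly_rcons_inv hchar hindep hpi Ys s0) => i y Yy.
  by apply/Y_pi_s/allpairs_f; rewrite ?mem_enum.
apply: (pi_stable_subspace hchar hindep hpi Z_pi).
move=> x /HsV /(Fpcomb_natcomb hchar); elim/natcomb_ind => [|u v|y sVy].
- exact: boxspan0.
- exact: boxspanD.
by apply: boxspan_mem; rewrite mem_rcons inE mem_cat sVy orbT.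
Qed.
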